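(* For $n\in\mathbb{N}$ and $q>0$, let $P_n^{\mathrm{LR}^-;q}$ be the probability measure on the symmetric group $S_n$ given by $$P_n^{\mathrm{LR}^-;q}(\sigma)=\frac{q^{\mathrm{LR}^-_n(\sigma)}}{q(q+1)\cdots(q+n-1)},\qquad \sigma\in S_n,$$ where $\mathrm{LR}^-_n(\sigma)=|\{j\in[n]:\sigma_j=\min\{\sigma_i:1\le i\le j\}\}|$ is the number of left-to-right minima of $\sigma=\sigma_1\sigma_2\cdots\sigma_n$. Let $E_n^{\mathrm{LR}^-;q}$ denote expectation with respect to $P_n^{\mathrm{LR}^-;q}$, and let $\{q_n\}_{n=1}^\infty$ be a sequence of positive numbers. Then: (i) If $q_n=o(\frac1{\log n})$, then $\lim_{n\to\infty}E_n^{\mathrm{LR}^-;q_n}\mathrm{LR}^-_n=1$. (ii) If $\lim_{n\to\infty}q_n\log n=c\in(0,\infty)$, then $\lim_{n\to\infty}E_n^{\mathrm{LR}^-;q_n}\mathrm{LR}^-_n=1+c$. (iii) If $\lim_{n\to\infty}q_n\log n=\infty$ and $q_n=O(1)$, then $E_n^{\mathrm{LR}^-;q_n}\mathrm{LR}^-_n\sim q_n\log n$. (iv) If $q_n\to\infty$ and $q_n=o(n)$, then $E_n^{\mathrm{LR}^-;q_n}\mathrm{LR}^-_n\sim q_n\log\frac{n+q_n}{1+q_n}$. In particular, if $q_n\sim cn^\alpha$ with $c>0$ and $\alpha\in(0,1)$, then $E_n^{\mathrm{LR}^-;q_n}\mathrm{LR}^-_n\sim c(1-\alpha)n^\alpha\log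 n$. (v) If $q_n\sim cn$ with $c>0$, then $E_n^{\mathrm{LR}^-;q_n}\mathrm{LR}^-_n\sim c\big(\log\frac{1+c}{c}\big)n$; moreover $c\log\frac{1+c}{c}\to 0$ as $c\to0$ and $c\log\frac{1+c}{c}\to1$ as $c\to\infty$. (vi) If $\lim_{n\to\infty}\frac{q_n}{n}=\infty$, then $E_n^{\mathrm{LR}^-;q_n}\mathrm{LR}^-_n\sim n$.
   Context: $[n]=\{1,\dots,n\}$. For sequences $a_n,b_n$, $a_n\sim b_n$ means $a_n/b_n\to1$ as $n\to\infty$. *)

From HB Require Import structures.
From mathcomp Require Import all_boot all_order all_algebra all_fingroup.
From mathcomp Require Import all_classical all_reals all_analysis.
Set Implicit Arguments. Unset Strict Implicit. Unset Printing Implicit Defensive.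
Import Order.TTheory GRing.Theory Num.Theory.
Local Open Scope ring_scope.

(* Number of left-to-right minima of s : 'S_n (positions/values 0-indexed,
   which is order-isomorphic to the 1-indexed convention): position j is a
   left-to-right minimum iff s j = min {s i : i <= j}, i.e. s j <= s i for
   all i <= j. *)
Definition LRmin (n : nat) (s : 'S_n) : nat :=
  #|[set j : 'I_n | [forall i : 'I_n, (i <= j)%N ==> (s j <= s i)%N]]|.

Definition rising (R : realType) (q : R) (n : nat) : R :=
  \prod_(i < n) (q + i%:R).

Definition PLR (R : realType) (q : R) {n : nat} (s : 'S_n) : R :=
  q ^+ LRmin s / rising q n.

Definition ELR (R : realType) (q : R) (n : nat) : R :=
  \sum_(s : 'S_n) (LRmin s)%:R * PLR q s.

(* Giving a permutation of [n] a new last letter j (and shifting the letters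
   >= j up) is a bijection [n+1] x S_n -> S_(n+1) under which LR^- grows by one
   exactly when j is the minimum. Hence sum_s q^(LR^- s) = q (q+1) ... (q+n-1),
   and the same recursion for sum_s LR^-(s) q^(LR^- s) gives the exact formula
   E_n^{LR^-;q} LR^-_n = sum_(i<n) q/(q+i). Comparing this sum with integrals of
   q/(q+x) yields 1 + q D_n <= E <= 2 + q D_n with D_n = ln ((n+q)/(1+q)), and
   E <= 1 + q + q ln n; every regime then follows by elementary asymptotics. *)

From HB Require Import structures.
From mathcomp Require Import all_boot all_order all_algebra all_fingroup.
From mathcomp Require Import all_classical all_reals all_analysis.
From mathcomp Require Import ring lra.
Set Implicit Arguments. Unset Strict Implicit. Unset Printing Implicit Defensive.
Import Order.TTheory GRing.Theory Num.Theory numFieldNormedType.Exports.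
Local Open Scope ring_scope.
Local Open Scope classical_set_scope.

Lemma lift_perm_pair_inj n (i : 'I_n.+1) :
  injective (fun p : 'I_n.+1 * 'S_n => lift_perm i p.1 p.2).
Proof.
move=> [j s] [j' s'] /= E.
have jj' : j = j' by rewrite -(lift_perm_id i j s) E lift_perm_id.
subst j'; congr pair; apply/permP => k; apply: (@lift_inj _ j).
by rewrite -!(lift_perm_lift i) E.
Qed.

Lemma sum_lift_perm (V : nmodType) n (i : 'I_n.+1) (F : 'S_n.+1 -> V) :
  \sum_(s : 'S_n.+1) F s = \sum_(j < n.+1) \sum_(s : 'S_n) F (lift_perm i j s).
Proof.
have bij := inj_card_bij (@lift_perm_pair_inj _ i).
rewrite pair_big /= (reindex _ (onW_bij _ (bij _))) //.
by rewrite card_prod !card_Sn card_ord factS.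
Qed.

Definition is_LRmin n (s : 'S_n) (j : 'I_n) : bool :=
  [forall i : 'I_n, (i <= j)%N ==> (s j <= s i)%N].

Lemma LRminE n (s : 'S_n) : LRmin s = (\sum_(j < n) is_LRmin s j)%N.
Proof.
rewrite /LRmin -sum1_card big_mkcond /=; apply: eq_bigr => j _.
by rewrite inE /is_LRmin; case: ifP.
Qed.

Lemma is_LRmin_lift n (j : 'I_n.+1) (s : 'S_n) (k : 'I_n) :
  is_LRmin (lift_perm ord_max j s) (lift ord_max k) = is_LRmin s k.
Proof.
apply/forallP/forallP => H i; apply/implyP.
  have := implyP (H (lift ord_max i)).
  by rewrite !lift_max !lift_perm_lift /= !leq_bump2.
case: (unliftP ord_max i) => [i'|] ->; last by rewrite lift_max leqNgt ltn_ord.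
by rewrite !lift_max !lift_perm_lift /= !leq_bump2; apply/implyP.
Qed.

Lemma is_LRmin_last n (j : 'I_n.+1) (s : 'S_n) :
  is_LRmin (lift_perm ord_max j s) ord_max = (j == ord0).
Proof.
apply/forallP/eqP => [H | ->] => [|i]; last by rewrite lift_perm_id leq0n implybT.
have := implyP (H ((lift_perm ord_max j s)^-1 ord0)%g).
by rewrite leq_ord permKV lift_perm_id leqn0 => /(_ isT) /eqP j0; apply: val_inj.
Qed.

Lemma LRmin_lift_perm n (j : 'I_n.+1) (s : 'S_n) :
  LRmin (lift_perm ord_max j s) = (LRmin s + (j == ord0))%N.
Proof.
rewrite !LRminE big_ord_recr is_LRmin_last; congr addn; apply: eq_bigr => k _.
rewrite -(is_LRmin_lift j); congr (nat_of_bool (is_LRmin _ _)).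
exact/val_inj/esym/lift_max.
Qed.

Lemma LRmin_S0 (s : 'S_0) : LRmin s = 0%N.
Proof. by rewrite LRminE big_ord0. Qed.

Lemma sum_LRmin_succ (V : nmodType) n (F : nat -> V) :
  \sum_(s : 'S_n.+1) F (LRmin s) =
  \sum_(s : 'S_n) (F (LRmin s).+1 + F (LRmin s) *+ n).
Proof.
rewrite (sum_lift_perm ord_max) exchange_big /=; apply: eq_bigr => s _.
rewrite big_ord_recl LRmin_lift_perm eqxx addn1; congr +%R.
rewrite (eq_bigr (fun _ => F (LRmin s))) ?sumr_const ?card_ord // => i _.
by rewrite LRmin_lift_perm eq_sym (negbTE (neq_lift _ _)) addn0.
Qed.

Lemma sum_pow_LRmin (R : comPzRingType) (x : R) n :
  \sum_(s : 'S_n) x ^+ LRmin s = \prod_(i < n) (x + i%:R).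
Proof.
elim: n => [|n IH].
  by rewrite big_ord0 (eq_bigr (fun _ => 1)) => [|s _]; rewrite ?sumr_const ?card_Sn ?LRmin_S0.
rewrite sum_LRmin_succ big_ord_recr /= -IH mulrC big_distrr /=.
by apply: eq_bigr => s _; rewrite exprS mulrDl mulr_natl.
Qed.

Definition qharmonic (R : fieldType) (q : R) (n : nat) : R :=
  \sum_(i < n) q / (q + i%:R).

Lemma sum_LRmin_mul_pow (R : numFieldType) (x : R) n : 0 < x ->
  \sum_(s : 'S_n) (LRmin s)%:R * x ^+ LRmin s =
  \prod_(i < n) (x + i%:R) * qharmonic x n.
Proof.
move=> x_gt0; elim: n => [|n IH].
  by rewrite /qharmonic !big_ord0 mulr0 big1 // => s _; rewrite LRmin_S0 mul0r.
have xn_neq0 : x + n%:R != 0 by rewrite gt_eqF // ltr_pwDl.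
rewrite (@sum_LRmin_succ _ n (fun k => k%:R * x ^+ k)).
rewrite (eq_bigr (fun s => (x + n%:R) * ((LRmin s)%:R * x ^+ LRmin s) + x * x ^+ LRmin s));
  last by move=> s _; rewrite -mulr_natr exprS -natr1; ring.
rewrite big_split -!big_distrr /= IH sum_pow_LRmin /qharmonic !big_ord_recr /=.
by field.
Qed.

Lemma ELR_qharmonic (R : realType) (q : R) n : 0 < q -> ELR q n = qharmonic q n.
Proof.
move=> q_gt0; rewrite /ELR /PLR.
under eq_bigr do rewrite mulrA.
rewrite -big_distrl /= sum_LRmin_mul_pow // mulrC /rising mulKf //.
by rewrite gt_eqF // prodr_gt0 // => i _; rewrite ltr_pwDl.
Qed.

Section LnBounds.
Variable R : realType.
Implicit Types x : R.

Lemma lnD1_sub_le x : 0 < x -> ln (x + 1) - ln x <= x^-1.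
Proof.
move=> x_gt0; rewrite -ln_div ?posrE ?addr_gt0 // mulrDl divff ?gt_eqF // mul1r.
by apply: le_ln1Dx; apply: lt_trans (ltrN10 R) _; rewrite invr_gt0.
Qed.

Lemma lnD1_sub_ge x : 0 < x -> (x + 1)^-1 <= ln (x + 1) - ln x.
Proof.
move=> x_gt0; have x1_gt0 : 0 < x + 1 by rewrite addr_gt0.
rewrite -opprB -ln_div ?posrE // lerNr.
have -> : x / (x + 1) = 1 + - (x + 1)^-1 by field; rewrite gt_eqF.
by apply: le_ln1Dx; rewrite ltrN2 invf_lt1 // ltrDr.
Qed.

Lemma sum_harmonic_le_ln n : \sum_(i < n.+1) harmonic i <= 1 + ln n.+1%:R :> R.
Proof.
elim: n => [|n IH]; first by rewrite big_ord1 /= ln1 addr0 invr1.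
have step : harmonic n.+1 <= ln n.+2%:R - ln n.+1%:R :> R.
  by rewrite /= -[n.+2%:R]natr1 lnD1_sub_ge.
rewrite big_ord_recr; apply: le_trans (lerD IH step) _; lra.
Qed.

End LnBounds.

Section QharmonicBounds.
Variables (R : realType) (q : R).
Hypothesis q_gt0 : 0 < q.

Lemma qharmonic_le n : qharmonic q n <= n%:R.
Proof.
rewrite -[n in n%:R]card_ord -sumr_const; apply: ler_sum => i _.
by rewrite ler_pdivrMr ?mul1r ?lerDl ?ltr_wpDr.
Qed.

Lemma qharmonic_ge n : n%:R * (q / (q + n%:R)) <= qharmonic q n.
Proof.
rewrite mulr_natl -[n in _ *+ n]card_ord -sumr_const; apply: ler_sum => i _.
by rewrite ler_pM2l // lef_pV2 ?posrE ?ltr_wpDr // lerD2l ler_nat ltnW.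
Qed.

Lemma qharmonicE n : qharmonic q n.+1 = 1 + \sum_(i < n) q / (q + i.+1%:R).
Proof. by rewrite /qharmonic big_ord_recl /= addr0 divff ?gt_eqF. Qed.

Lemma qharmonic_le_harmonic n : qharmonic q n.+1 <= 1 + q * \sum_(i < n) harmonic i.
Proof.
rewrite qharmonicE lerD2l big_distrr /=; apply: ler_sum => i _.
by rewrite ler_pM2l // lef_pV2 ?posrE ?ltr_wpDr // lerDr ltW.
Qed.

Lemma qharmonic_le_ln n : (0 < n)%N -> qharmonic q n <= 1 + q + q * ln n%:R.
Proof.
case: n => // n _; apply: le_trans (qharmonic_le_harmonic n) _.
rewrite -addrA lerD2l -[X in _ <= X + _]mulr1 -mulrDr ler_pM2l //.
case: n => [|n]; first by rewrite big_ord0 ln1 addr0.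
apply: le_trans (sum_harmonic_le_ln _ n) _.
by rewrite lerD2l ler_ln ?posrE ?ltr0n // ler_nat.
Qed.

Lemma qharmonic_ge_ln n : 1 + q * (ln (q + n.+1%:R) - ln (q + 1)) <= qharmonic q n.+1.
Proof.
rewrite qharmonicE lerD2l.
have -> : ln (q + n.+1%:R) - ln (q + 1) =
          \sum_(0 <= i < n) (ln (q + i.+2%:R) - ln (q + i.+1%:R)).
  by rewrite (@telescope_sumr_eq _ 0 n (fun k => ln (q + k.+1%:R))).
rewrite big_mkord big_distrr /=.
apply: ler_sum => i _; rewrite ler_pM2l // -[i.+2%:R]natr1 addrA.
by apply: lnD1_sub_le; rewrite ltr_wpDr.
Qed.

Lemma qharmonic_le_ln_q n : qharmonic q n.+1 <= 1 + q * (ln (q + n%:R) - ln q).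
Proof.
rewrite qharmonicE lerD2l.
have -> : ln (q + n%:R) - ln q = \sum_(0 <= i < n) (ln (q + i.+1%:R) - ln (q + i%:R)).
  by rewrite (@telescope_sumr_eq _ 0 n (fun k => ln (q + k%:R))) ?addr0.
rewrite big_mkord big_distrr /=.
apply: ler_sum => i _; rewrite ler_pM2l // -natr1 addrA.
by apply: lnD1_sub_ge; rewrite ltr_wpDr.
Qed.

Lemma lnD_ratioE n : ln ((n%:R + q) / (1 + q)) = ln (q + n%:R) - ln (q + 1).
Proof. by rewrite ln_div ?posrE ?ltr_wpDl ?addr_gt0 // [n%:R + q]addrC [1 + q]addrC. Qed.

Lemma qharmonic_bounds n : (0 < n)%N ->
  1 + q * ln ((n%:R + q) / (1 + q)) <= qharmonic q n <= 2 + q * ln ((n%:R + q) / (1 + q)).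
Proof.
case: n => // n _; rewrite lnD_ratioE qharmonic_ge_ln /=.
apply: le_trans (qharmonic_le_ln_q n) _.
have ln_le : q * ln (q + n%:R) <= q * ln (q + n.+1%:R).
  by rewrite ler_pM2l // ler_ln ?posrE ?ltr_wpDr // lerD2l ler_nat.
have lnq1 : q * (ln (q + 1) - ln q) <= 1.
  by rewrite -[X in _ <= X](mulfV (lt0r_neq0 q_gt0)) ler_pM2l // lnD1_sub_le.
lra.
Qed.

Lemma qharmonic_ge_lnn n : (0 < n)%N -> 1 + q * ln n%:R - q ^+ 2 <= qharmonic q n.
Proof.
move=> n_gt0; case/andP: (qharmonic_bounds n_gt0) => lower _; apply: le_trans lower.
rewrite lnD_ratioE -addrA lerD2l expr2 -mulrBr ler_pM2l //.
have ln_le : ln n%:R <= ln (q + n%:R).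
  by rewrite ler_ln ?posrE ?ltr0n ?lerDr ?ltW ?ltr_pwDl.
have lnq1 : ln (q + 1) <= q by rewrite addrC le_ln1Dx // (lt_trans (ltrN10 R)).
lra.
Qed.

End QharmonicBounds.

Section FilterLimits.
Context {R : realType} {T : Type} {F : set_system T} {FF : Filter F}.
Implicit Types f g E X : T -> R.

Lemma cvgy_ln f : f @ F --> +oo -> (fun x => ln (f x)) @ F --> +oo.
Proof.
move=> /cvgryPge fy; apply/cvgryPge => A; apply: filterS (fy (expR A)) => x fxA.
have fx_gt0 : 0 < f x by apply: lt_le_trans fxA; exact: expR_gt0.
by rewrite -[A]expRK ler_ln ?posrE ?expR_gt0.
Qed.

Lemma cvgyV f : f @ F --> +oo -> (fun x => (f x)^-1) @ F --> 0.
Proof.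
move=> fy; have f_gt0 : \forall x \near F, 0 < f x by move/cvgryPgt: fy; apply.
by apply/(gtr0_cvgV0 f_gt0).
Qed.

Lemma cvgyMl (k : R) f : 0 < k -> f @ F --> +oo -> (fun x => k * f x) @ F --> +oo.
Proof.
move=> k_gt0 /cvgryPge fy; apply/cvgryPge => A.
by apply: filterS (fy (A / k)) => x; rewrite ler_pdivrMr // mulrC.
Qed.

Lemma cvg0_mul_cvgy f g (c : R) :
  g @ F --> +oo -> (fun x => f x * g x) @ F --> c -> f @ F --> 0.
Proof.
move=> gy fgc; have g_gt0 : \forall x \near F, 0 < g x by move/cvgryPgt: gy; apply.
rewrite -(mulr0 c); apply: cvg_trans (cvgM fgc (cvgyV gy)).
by apply: near_eq_cvg; apply: filterS g_gt0 => x /= gx; rewrite mulfK ?gt_eqF.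
Qed.

Lemma cvgy_ratio1 f g :
  g @ F --> +oo -> (fun x => f x / g x) @ F --> (1 : R) -> f @ F --> +oo.
Proof.
move=> gy fg1; apply/cvgryPge => A; near=> x.
have gx_gt0 : 0 < g x by near: x; move/cvgryPgt: gy; apply.
have gx_ge : 2 * A <= g x by near: x; move/cvgryPge: gy; apply.
have fgx_ge : 2^-1 <= f x / g x by near: x; apply: (cvgr_ge _ fg1); rewrite invf_lt1 ?ltr1n.
apply: (@le_trans _ _ (2^-1 * g x)); first by rewrite ler_pdivlMl.
by rewrite -[f x](divfK (lt0r_neq0 gx_gt0)) ler_pM2r.
Unshelve. all: by end_near.
Qed.

Lemma cvgyD f g (l : R) :
  f @ F --> +oo -> g @ F --> l -> (fun x => f x + g x) @ F --> +oo.
Proof.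
move=> /cvgryPge fy gl; apply/cvgryPge => A.
apply: filterS2 (fy (A - l + 1)) (cvgr_ge _ gl (l - 1) _) => [x|]; lra.
Qed.

Lemma cvg_ratio1_bounds (a b : R) E X : X @ F --> +oo ->
  (\forall x \near F, a + X x <= E x <= b + X x) ->
  (fun x => E x / X x) @ F --> (1 : R).
Proof.
move=> Xy EX; have Xinv := cvgyV Xy.
have lim_affine (c : R) : (fun x => 1 + c * (X x)^-1) @ F --> (1 : R).
  rewrite -[X in _ --> X]addr0 -(mulr0 c).
  by apply: cvgD; [exact: cvg_cst | exact: cvgMl_tmp].
apply: squeeze_cvgr (lim_affine a) (lim_affine b); near=> x.
have X_gt0 : 0 < X x by near: x; move/cvgryPgt: Xy; apply.
have /andP[lo hi] : a + X x <= E x <= b + X x by near: x.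
have affineE (c : R) : 1 + c * (X x)^-1 = (c + X x) / X x by field; rewrite gt_eqF.
by rewrite !affineE !ler_pM2r ?invr_gt0 ?lo.
Unshelve. all: by end_near.
Qed.

Lemma cvg_ratio1_trans E f g :
  (fun x => E x / f x) @ F --> (1 : R) -> (fun x => f x / g x) @ F --> (1 : R) ->
  (\forall x \near F, f x != 0) -> (fun x => E x / g x) @ F --> (1 : R).
Proof.
move=> Ef fg f_neq0; rewrite -(mulr1 1); apply: cvg_trans (cvgM Ef fg).
by apply: near_eq_cvg; apply: filterS f_neq0 => x fx /=; rewrite mulrA divfK.
Qed.

End FilterLimits.

Section NatLimits.
Context {R : realType}.

Lemma lnn_cvgy : (fun n : nat => ln (n%:R : R)) @ \oo --> +oo.
Proof. exact: cvgy_ln cvgr_idn. Qed.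

Lemma powRn_cvgy (b : R) : 0 < b -> (fun n : nat => n%:R `^ b) @ \oo --> +oo.
Proof.
move=> b_gt0; apply: ger_cvgy (cvgyMl b_gt0 lnn_cvgy); near=> n.
rewrite -ln_powR ltW // ln_sublinear // powR_gt0 // ltr0n.
by near: n; exact: nbhs_infty_gt.
Unshelve. all: by end_near.
Qed.

End NatLimits.

Section Regimes.
Variables (R : realType) (q : nat -> R).
Hypothesis q_gt0 : forall n, (0 < n)%N -> 0 < q n.

Lemma ELR_cvg_qlnn (c : R) : (fun n => q n * ln n%:R) @ \oo --> c ->
  (fun n => ELR (q n) n) @ \oo --> 1 + c.
Proof.
move=> qlnc; have q0 : q @ \oo --> 0 by apply: cvg0_mul_cvgy lnn_cvgy qlnc.
apply: (@squeeze_cvgr _ _ _ _ (fun n => 1 + q n * ln n%:R - q n * q n)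
                               (fun n => 1 + q n + q n * ln n%:R)).
- near=> n; have n_gt0 : (0 < n)%N by near: n; exact: nbhs_infty_gt.
  by rewrite ELR_qharmonic ?q_gt0 // -expr2 qharmonic_ge_lnn ?qharmonic_le_ln ?q_gt0.
- rewrite -[X in _ --> X]subr0 -(mulr0 0).
  by apply: cvgB; [apply: cvgD; [exact: cvg_cst | exact: qlnc] | exact: cvgM].
- rewrite -[X in _ --> X + _]addr0.
  by apply: cvgD; [apply: cvgD; [exact: cvg_cst | exact: q0] | exact: qlnc].
Unshelve. all: by end_near.
Qed.

Lemma ELR_equiv_qlnn : (fun n => q n * ln n%:R) @ \oo --> +oo ->
  (exists M : R, \forall n \near \oo, `|q n| <= M) ->
  (fun n => ELR (q n) n / (q n * ln n%:R)) @ \oo --> (1 : R).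
Proof.
move=> qlny [M qM].
apply: (@cvg_ratio1_bounds R nat \oo _ (1 - M ^+ 2) (1 + M) _ _ qlny).
near=> n; have n_gt0 : (0 < n)%N by near: n; exact: nbhs_infty_gt.
have qn_gt0 := q_gt0 n_gt0.
have qn_le : q n <= M by apply: le_trans (ler_norm _) _; near: n.
rewrite ELR_qharmonic //; apply/andP; split.
  by apply: le_trans (qharmonic_ge_lnn qn_gt0 n_gt0); nra.
by apply: le_trans (qharmonic_le_ln qn_gt0 n_gt0) _; lra.
Unshelve. all: by end_near.
Qed.

Lemma ELR_equiv_qD :
  (fun n => q n * ln ((n%:R + q n) / (1 + q n))) @ \oo --> +oo ->
  (fun n => ELR (q n) n / (q n * ln ((n%:R + q n) / (1 + q n)))) @ \oo --> (1 : R).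
Proof.
move=> qDy; apply: (@cvg_ratio1_bounds R nat \oo _ 1 2 _ _ qDy).
near=> n; have n_gt0 : (0 < n)%N by near: n; exact: nbhs_infty_gt.
by rewrite ELR_qharmonic ?qharmonic_bounds ?q_gt0.
Unshelve. all: by end_near.
Qed.

Section LargeQ.
Hypotheses (qy : q @ \oo --> +oo) (q_small : (fun n => q n / n%:R) @ \oo --> (0 : R)).

Lemma lnD_sub_ln_cvg0 :
  (fun n => ln ((n%:R + q n) / (1 + q n)) - ln (n%:R / q n)) @ \oo --> (0 : R).
Proof.
have ratio1 : (fun n => (1 + q n / n%:R) / (1 + (q n)^-1)) @ \oo --> (1 : R).
  have inv_q0 : (fun n => (q n)^-1) @ \oo --> (0 : R) by apply: cvgyV.
  have := cvgM (cvgD (cvg_cst (1 : R)) q_small) (cvgV _ (cvgD (cvg_cst (1 : R)) inv_q0)).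
  by rewrite !addr0 invr1 mulr1; apply; rewrite oner_neq0.
rewrite -ln1; apply: cvg_trans (continuous_cvg _ (continuous_ln ltr01) ratio1).
apply: near_eq_cvg; near=> n; have n_gt0 : (0 < n)%N by near: n; exact: nbhs_infty_gt.
have qn_gt0 := q_gt0 n_gt0; have nR_gt0 : (0 : R) < n%:R by rewrite ltr0n.
rewrite /= -ln_div ?posrE ?divr_gt0 ?addr_gt0 ?ltr_pwDl //; congr ln.
by field; rewrite !gt_eqF ?addr_gt0 ?divr_gt0 ?invr_gt0.
Unshelve. all: by end_near.
Qed.

Lemma lnD_cvgy : (fun n => ln ((n%:R + q n) / (1 + q n))) @ \oo --> +oo.
Proof.
have q_small_gt0 : \forall n \near \oo, 0 < q n / n%:R.
  near=> n; have n_gt0 : (0 < n)%N by near: n; exact: nbhs_infty_gt.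
  by rewrite divr_gt0 ?q_gt0 ?ltr0n.
have ratio_y : (fun n => n%:R / q n) @ \oo --> +oo.
  apply: cvg_trans ((cvgrVy q_small_gt0).2 q_small).
  by apply: near_eq_cvg; near=> n; rewrite /= invf_div.
apply: cvg_trans (cvgyD (cvgy_ln ratio_y) lnD_sub_ln_cvg0).
by apply: near_eq_cvg; near=> n; rewrite /= addrC subrK.
Unshelve. all: by end_near.
Qed.

Lemma qlnD_cvgy : (fun n => q n * ln ((n%:R + q n) / (1 + q n))) @ \oo --> +oo.
Proof.
apply: ger_cvgy lnD_cvgy; near=> n.
have q_ge1 : 1 <= q n by near: n; move/cvgryPge: qy; apply.
have D_ge0 : 0 <= ln ((n%:R + q n) / (1 + q n)) by near: n; move/cvgryPge: lnD_cvgy; apply.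
by rewrite ler_peMl.
Unshelve. all: by end_near.
Qed.

End LargeQ.

Section PowerRegime.
Variables c a : R.
Hypotheses (c_gt0 : 0 < c) (a_gt0 : 0 < a) (a_lt1 : a < 1).
Hypothesis qc1 : (fun n => q n / (c * n%:R `^ a)) @ \oo --> (1 : R).

Lemma powR_regime_qy : q @ \oo --> +oo.
Proof. by apply: cvgy_ratio1 qc1; exact: cvgyMl c_gt0 (powRn_cvgy a_gt0). Qed.

Lemma powR_regime_q_small : (fun n => q n / n%:R) @ \oo --> (0 : R).
Proof.
have inv_pow0 : (fun n => (n%:R `^ (1 - a))^-1) @ \oo --> (0 : R).
  by apply: cvgyV; apply: powRn_cvgy; rewrite subr_gt0.
have lim : (fun n => q n / (c * n%:R `^ a) * (c * (n%:R `^ (1 - a))^-1))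
    @ \oo --> 1 * (c * 0).
  by apply: cvgM => //; exact: cvgMl_tmp.
rewrite mulr0 mulr0 in lim; apply: cvg_trans lim.
apply: near_eq_cvg; near=> n; have n_gt0 : (0 < n)%N by near: n; exact: nbhs_infty_gt.
have nR_gt0 : (0 : R) < n%:R by rewrite ltr0n.
have nE : n%:R = n%:R `^ a * n%:R `^ (1 - a) :> R.
  by rewrite -powRD ?(gt_eqF nR_gt0) ?implybT // addrC subrK powRr1 // ltW.
rewrite /= [in RHS]nE.
have Pa_gt0 : 0 < n%:R `^ a by rewrite powR_gt0.
have Pb_gt0 : 0 < n%:R `^ (1 - a) by rewrite powR_gt0.
set Pa := n%:R `^ a in Pa_gt0 *; set Pb := n%:R `^ (1 - a) in Pb_gt0 *.
by field; rewrite !gt_eqF.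
Unshelve. all: by end_near.
Qed.

Lemma powR_regime_lnD :
  (fun n => ln ((n%:R + q n) / (1 + q n)) / ln n%:R) @ \oo --> 1 - a.
Proof.
have qc_ln0 : (fun n => ln (q n / (c * n%:R `^ a))) @ \oo --> (0 : R).
  by rewrite -ln1; exact: continuous_cvg _ (continuous_ln ltr01) qc1.
rewrite -[X in _ --> X]addr0 -(mulr0 (0 - 0 - ln c)).
apply: cvg_trans (cvgD (cvg_cst (1 - a)) (cvgM (cvgB (cvgB (lnD_sub_ln_cvg0
  powR_regime_qy powR_regime_q_small) qc_ln0) (cvg_cst (ln c))) (cvgyV lnn_cvgy))).
apply: near_eq_cvg; near=> n.
have n_gt1 : (1 < n)%N by near: n; exact: nbhs_infty_gt.
have qn_gt0 : 0 < q n by apply: q_gt0; exact: ltnW.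
have nR_gt0 : (0 : R) < n%:R by rewrite ltr0n ltnW.
have lnn_gt0 : 0 < ln (n%:R : R) by rewrite ln_gt0 // ltr1n.
(* [ln q = ln (q / (c n^a)) + ln c + a ln n], so the error term is [D - (1 - a) ln n]. *)
rewrite !fctE /=; set D := ln ((n%:R + q n) / (1 + q n)).
rewrite !ln_div ?posrE ?divr_gt0 ?mulr_gt0 ?powR_gt0 // lnM ?posrE ?powR_gt0 // ln_powR.
set L := ln n%:R in lnn_gt0 *.
by field; rewrite gt_eqF.
Unshelve. all: by end_near.
Qed.

Lemma ELR_equiv_powR :
  (fun n => ELR (q n) n / (c * (1 - a) * n%:R `^ a * ln n%:R)) @ \oo --> (1 : R).
Proof.
have qDy := qlnD_cvgy powR_regime_qy powR_regime_q_small.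
have a1_gt0 : 0 < 1 - a by rewrite subr_gt0.
apply: cvg_ratio1_trans (ELR_equiv_qD qDy) _ _; last first.
  by move/cvgryPgt: qDy => /(_ 0); apply: filterS => n /lt0r_neq0.
have oneE : (1 : R) = 1 * (1 - a) / (1 - a) by rewrite mul1r mulfV ?lt0r_neq0.
rewrite [X in _ --> X]oneE.
apply: cvg_trans (cvgM (cvgM qc1 powR_regime_lnD) (cvg_cst (1 - a)^-1)).
apply: near_eq_cvg; near=> n.
have n_gt1 : (1 < n)%N by near: n; exact: nbhs_infty_gt.
have L_gt0 : 0 < ln (n%:R : R) by rewrite ln_gt0 // ltr1n.
have P_gt0 : 0 < n%:R `^ a :> R by rewrite powR_gt0 // ltr0n ltnW.
rewrite /=; set D := ln (_ / _); set L := ln n%:R in L_gt0 *.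
set P := _ `^ a in P_gt0 *.
by field; rewrite !gt_eqF.
Unshelve. all: by end_near.
Qed.

End PowerRegime.

Section LinearRegime.
Variable c : R.
Hypotheses (c_gt0 : 0 < c) (qc1 : (fun n => q n / (c * n%:R)) @ \oo --> (1 : R)).

Lemma linear_regime_lnD :
  (fun n => ln ((n%:R + q n) / (1 + q n))) @ \oo --> ln ((1 + c) / c).
Proof.
have qn_c : (fun n => q n / n%:R) @ \oo --> c.
  rewrite -[X in _ --> X]mulr1; apply: cvg_trans (cvgMl_tmp qc1).
  apply: near_eq_cvg; near=> n; have n_gt0 : (0 < n)%N by near: n; exact: nbhs_infty_gt.
  have nR_gt0 : (0 : R) < n%:R by rewrite ltr0n.
  by rewrite /=; set N := n%:R in nR_gt0 *; field; rewrite !gt_eqF.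
have ratio_lim : (fun n => (1 + q n / n%:R) / ((n%:R)^-1 + q n / n%:R))
    @ \oo --> (1 + c) / (0 + c).
  apply: cvgM (cvgD (cvg_cst (1 : R)) qn_c) (cvgV _ (cvgD (cvgyV cvgr_idn) qn_c)).
  by rewrite add0r lt0r_neq0.
rewrite add0r in ratio_lim.
apply: cvg_trans (continuous_cvg _ (continuous_ln _) ratio_lim);
  last by rewrite divr_gt0 ?addr_gt0.
apply: near_eq_cvg; near=> n; have n_gt0 : (0 < n)%N by near: n; exact: nbhs_infty_gt.
have qn_gt0 := q_gt0 n_gt0; have nR_gt0 : (0 : R) < n%:R by rewrite ltr0n.
rewrite /=; congr ln; set N := n%:R in nR_gt0 *.
by field; rewrite !gt_eqF ?addr_gt0 ?ltr_pwDl ?ltW ?invr_gt0 ?divr_gt0.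
Unshelve. all: by end_near.
Qed.

Lemma ELR_equiv_linear :
  (fun n => ELR (q n) n / (c * ln ((1 + c) / c) * n%:R)) @ \oo --> (1 : R).
Proof.
have L_gt0 : 0 < ln ((1 + c) / c) by rewrite ln_gt0 // ltr_pdivlMr // mul1r ltrDr.
have qDT : (fun n => q n * ln ((n%:R + q n) / (1 + q n)) / (c * ln ((1 + c) / c) * n%:R))
    @ \oo --> (1 : R).
  rewrite -[X in _ --> X](mulfV (lt0r_neq0 L_gt0)) -[X in _ --> X]mul1r.
  apply: cvg_trans (cvgM qc1 (cvgMr_tmp linear_regime_lnD)).
  apply: near_eq_cvg; near=> n; have n_gt0 : (0 < n)%N by near: n; exact: nbhs_infty_gt.
  have nR_gt0 : (0 : R) < n%:R by rewrite ltr0n.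
  rewrite /=; set L := ln ((1 + c) / c) in L_gt0 *; set D := ln (_ / (1 + q n)).
  set N := n%:R in nR_gt0 *.
  by field; rewrite !gt_eqF.
have Ty : (fun n => c * ln ((1 + c) / c) * n%:R) @ \oo --> +oo.
  by apply: cvgyMl cvgr_idn; rewrite mulr_gt0.
have qDy : (fun n => q n * ln ((n%:R + q n) / (1 + q n))) @ \oo --> +oo.
  exact: cvgy_ratio1 Ty qDT.
apply: cvg_ratio1_trans (ELR_equiv_qD qDy) qDT _.
by move/cvgryPgt: qDy => /(_ 0); apply: filterS => n /lt0r_neq0.
Unshelve. all: by end_near.
Qed.

End LinearRegime.

Lemma ELR_equiv_n : (fun n => q n / n%:R) @ \oo --> +oo ->
  (fun n => ELR (q n) n / n%:R) @ \oo --> (1 : R).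
Proof.
move=> qny; have inv0 : (fun n => (q n / n%:R + 1)^-1) @ \oo --> (0 : R).
  by apply: cvgyV; exact: cvgyD qny (cvg_cst (1 : R)).
apply: (@squeeze_cvgr _ _ _ _ (fun n => 1 - (q n / n%:R + 1)^-1) (fun=> 1));
  last exact: cvg_cst.
- near=> n; have n_gt0 : (0 < n)%N by near: n; exact: nbhs_infty_gt.
  have qn_gt0 := q_gt0 n_gt0; have nR_gt0 : (0 : R) < n%:R by rewrite ltr0n.
  rewrite ELR_qharmonic // ler_pdivrMr // mul1r qharmonic_le // andbT.
  have -> : 1 - (q n / n%:R + 1)^-1 = n%:R * (q n / (q n + n%:R)) / n%:R.
    by set N := n%:R in nR_gt0 *; field; rewrite !gt_eqF ?addr_gt0 ?divr_gt0.
  by rewrite ler_pM2r ?invr_gt0 // qharmonic_ge.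
- by rewrite -[X in _ --> X]subr0; apply: cvgB (cvg_cst (1 : R)) inv0.
Unshelve. all: by end_near.
Qed.

End Regimes.

Section RealLimits.
Variable R : realType.

Lemma mul_ln_ratio_cvgy : (fun c : R => c * ln ((1 + c) / c)) @ +oo --> (1 : R).
Proof.
have inv0 : (fun c : R => (c + 1)^-1) @ +oo --> (0 : R).
  by apply: cvgyV; apply: cvgyD cvg_id (cvg_cst (1 : R)).
apply: (@squeeze_cvgr _ _ _ _ (fun c => 1 - (c + 1)^-1) (fun=> 1)); last exact: cvg_cst.
- near=> c; have c_gt0 : 0 < c by near: c; apply: nbhs_pinfty_gt; rewrite num_real.
  have -> : ln ((1 + c) / c) = ln (c + 1) - ln c by rewrite addrC ln_div ?posrE ?addr_gt0.
  apply/andP; split.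
    have -> : 1 - (c + 1)^-1 = c * (c + 1)^-1 by field; rewrite gt_eqF ?addr_gt0.
    by rewrite ler_pM2l // lnD1_sub_ge.
  by rewrite -[X in _ <= X](mulfV (lt0r_neq0 c_gt0)) ler_pM2l // lnD1_sub_le.
- by rewrite -[X in _ --> X]subr0; apply: cvgB (cvg_cst (1 : R)) inv0.
Unshelve. all: by end_near.
Qed.

Lemma ln_le_sqrt (y : R) : 0 < y -> ln y <= 2 * Num.sqrt y.
Proof.
move=> y_gt0; have sy_gt0 : 0 < Num.sqrt y by rewrite sqrtr_gt0.
rewrite -{1}(sqr_sqrtr (ltW y_gt0)) lnXn // -[X in X <= _]mulr_natl ler_pM2l //.
exact/ltW/ln_sublinear.
Qed.

Lemma mul_ln_ratio_cvg0 : (fun c : R => c * ln ((1 + c) / c)) @ 0^'+ --> (0 : R).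
Proof.
have prod0 : (fun c : R => c * (1 + c)) @ 0 --> (0 * (1 + 0) : R).
  by apply: cvgM; [exact: cvg_id | apply: cvgD; [exact: cvg_cst | exact: cvg_id]].
rewrite mul0r in prod0.
have sqrt0 : (fun c : R => Num.sqrt (c * (1 + c))) @ 0 --> Num.sqrt (0 : R).
  exact: continuous_cvg _ (@sqrt_continuous R 0) prod0.
have bound0 : (fun c : R => 2 * Num.sqrt (c * (1 + c))) @ 0^'+ --> (0 : R).
  apply: cvg_at_right_filter; rewrite sqrtr0 in sqrt0.
  by rewrite -[X in _ --> X](mulr0 2); exact: cvgMl_tmp sqrt0.
apply: (@squeeze_cvgr _ _ _ _ (fun=> 0) _ _ _ _ (cvg_cst 0) bound0).
near=> c; have c_gt0 : 0 < c by near: c; exact: nbhs_right_gt.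
have y_gt1 : 1 < (1 + c) / c by rewrite ltr_pdivlMr // mul1r ltrDr.
apply/andP; split; first by rewrite mulr_ge0 ?ln_ge0 ?ltW.
have sqrtE : Num.sqrt (c * (1 + c)) = c * Num.sqrt ((1 + c) / c).
  have -> : c * (1 + c) = c ^+ 2 * ((1 + c) / c) by field; rewrite gt_eqF.
  by rewrite sqrtrM ?sqr_ge0 // sqrtr_sqr ger0_norm ?ltW.
rewrite sqrtE [X in _ <= X]mulrCA ler_pM2l //; apply: ln_le_sqrt.
exact: lt_trans y_gt1.
Unshelve. all: by end_near.
Qed.

End RealLimits.

Theorem proposition1p1 (R : realType) :
  (* (i) *)
  (forall q : nat -> R, (forall n, (0 < n)%N -> 0 < q n) ->
     (fun n : nat => q n * ln (n%:R : R)) @ \oo --> (0 : R) ->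
     (fun n : nat => ELR (q n) n) @ \oo --> (1 : R)) /\
  (* (ii) *)
  (forall (q : nat -> R) (c : R), (forall n, (0 < n)%N -> 0 < q n) -> 0 < c ->
     (fun n : nat => q n * ln (n%:R : R)) @ \oo --> c ->
     (fun n : nat => ELR (q n) n) @ \oo --> 1 + c) /\
  (* (iii) *)
  (forall q : nat -> R, (forall n, (0 < n)%N -> 0 < q n) ->
     (fun n : nat => q n * ln (n%:R : R)) @ \oo --> +oo ->
     (exists M : R, \forall n \near \oo, `|q n| <= M) ->
     (fun n : nat => ELR (q n) n / (q n * ln (n%:R : R))) @ \oo --> (1 : R)) /\
  (* (iv) *)
  (forall q : nat -> R, (forall n, (0 < n)%N -> 0 < q n) ->
     q @ \oo --> +oo ->
     (fun n : nat => q n / n%:R) @ \oo --> (0 : R) ->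
     (fun n : nat => ELR (q n) n / (q n * ln ((n%:R + q n) / (1 + q n))))
        @ \oo --> (1 : R)) /\
  (* (iv), "in particular" *)
  (forall (q : nat -> R) (c a : R), (forall n, (0 < n)%N -> 0 < q n) ->
     0 < c -> 0 < a < 1 ->
     (fun n : nat => q n / (c * (n%:R `^ a))) @ \oo --> (1 : R) ->
     (fun n : nat => ELR (q n) n / (c * (1 - a) * (n%:R `^ a) * ln (n%:R : R)))
        @ \oo --> (1 : R)) /\
  (* (v) *)
  ((forall (q : nat -> R) (c : R), (forall n, (0 < n)%N -> 0 < q n) -> 0 < c ->
     (fun n : nat => q n / (c * n%:R)) @ \oo --> (1 : R) ->
     (fun n : nat => ELR (q n) n / (c * ln ((1 + c) / c) * n%:R)) @ \oo --> (1 : R)) /\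
   (fun c : R => c * ln ((1 + c) / c)) @ 0^'+ --> (0 : R) /\
   (fun c : R => c * ln ((1 + c) / c)) @ +oo --> (1 : R)) /\
  (* (vi) *)
  (forall q : nat -> R, (forall n, (0 < n)%N -> 0 < q n) ->
     (fun n : nat => q n / n%:R) @ \oo --> +oo ->
     (fun n : nat => ELR (q n) n / n%:R) @ \oo --> (1 : R)).
Proof.
split; first by move=> q q_gt0 qln0; rewrite -[X in _ --> X]addr0; exact: ELR_cvg_qlnn.
split; first by move=> q c q_gt0 _; exact: ELR_cvg_qlnn.
split; first exact: ELR_equiv_qlnn.
split; first by move=> q q_gt0 qy q_small; exact: ELR_equiv_qD (qlnD_cvgy q_gt0 qy q_small).
split; first by move=> q c a q_gt0 c_gt0 /andP[a_gt0 a_lt1]; exact: ELR_equiv_powR.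
split; last exact: ELR_equiv_n.
split; first by move=> q c q_gt0 c_gt0; exact: ELR_equiv_linear.
by split; [exact: mul_ln_ratio_cvg0 | exact: mul_ln_ratio_cvgy].
Qed.
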